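(* Let $\mathcal{T}$ be a domain of size $k$, let $\mathbf{x}\in\mathbb{R}^k$ represent a database, let $\mathbf{W}$ be a workload of $q$ linear queries, and let $G=(V,E)$ be a Blowfish policy graph that is a tree. Then there is a matrix $\mathbf{P}_G$ depending only on $G$, with right inverse $\mathbf{P}_G^{-1}$, such that the mapping $f(\mathbf{x},\mathbf{W},G)=(\mathbf{P}_G^{-1}\mathbf{x},\mathbf{W}\mathbf{P}_G)$ is invertible, $\mathbf{W}\mathbf{P}_G\mathbf{P}_G^{-1}\mathbf{x}=\mathbf{W}\mathbf{x}$, and a mechanism $\mathcal{M}$ is an $(\epsilon,G)$-Blowfish private mechanism for answering $\mathbf{W}$ on $\mathbf{x}$ with error $\alpha$ if and only if $\mathcal{M}$ is an $\epsilon$-differentially private mechanism for answering $\mathbf{W}\mathbf{P}_G$ on $\mathbf{P}_G^{-1}\mathbf{x}$ with error $\alpha$.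
   Context: Databases over $\mathcal{T}=\{v_1,\dots,v_k\}$ are histogram vectors $\mathbf{x}\in\mathbb{R}^k$; a workload is a matrix $\mathbf{W}$ whose rows are linear queries with answers $\mathbf{W}\mathbf{x}$. A policy graph is a graph $G=(V,E)$ with $V\subseteq\mathcal{T}\cup\{\bot\}$ for a special vertex $\bot$. Databases $\mathbf{x},\mathbf{x}'$ are Blowfish neighbors under $G$ iff $\mathbf{x}-\mathbf{x}'=\pm(\mathbf{e}_u-\mathbf{e}_v)$ for some edge $(u,v)\in E$ with $u,v\ne\bot$ (one record changes value from $u$ to $v$), or $\mathbf{x}-\mathbf{x}'=\pm\mathbf{e}_u$ for some edge $(u,\bot)\in E$ (one record of value $u$ is added or removed). $\mathcal{M}$ is $(\epsilon,G)$-Blowfish private if $\Pr[\mathcal{M}(\mathbf{x})\in S]\le e^{\epsilon}\Pr[\mathcal{M}(\mathbf{x}')\in S]$ for all output sets $S$ and all Blowfish neighbors $\mathbf{x},\mathbf{x}'$; $\epsilon$-differential privacy (unbounded) is the same condition for all pairs of inputs differing by $\pm$ a single standard unit vector. The error of a mechanism answering workload $\mathbf{W}$ (rows $\mathbf{q}_i$) on $\mathbf{x}$ is $\sum_i\mathbb{E}[(\mathbf{q}_i\mathbf{x}-\mathcal{M}(\mathbf{q}_i,\mathbf{x}))^2]$. *)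

From HB Require Import structures.
From mathcomp Require Import all_boot all_order all_algebra.
From mathcomp Require Import all_classical all_reals all_analysis.

Set Implicit Arguments.
Unset Strict Implicit.
Unset Printing Implicit Defensive.

Import Order.TTheory GRing.Theory Num.Theory.
Local Open Scope classical_set_scope.
Local Open Scope ring_scope.

(* Domain T = {v_1,...,v_k} is 'I_k; the vertex type of a policy graph is
   option 'I_k, where None plays the role of the special vertex ⊥.         *)
Notation bot := (@None _) (only parsing).

Definition unitv (R : ringType) (n : nat) (u : 'I_n) : 'cV[R]_n := delta_mx u 0.

Definition is_policy_tree (k : nat) (E : rel (option 'I_k)) : Prop :=
  [/\ symmetric E,
      irreflexive E,
      (forall u v, connect E u v)
    & (forall p : seq (option 'I_k), uniq p -> (2 < size p)%N -> ~~ cycle E p)].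

Definition blowfish_neighbors (R : ringType) (k : nat) (E : rel (option 'I_k))
    (x x' : 'cV[R]_k) : Prop :=
  (exists u v : 'I_k, E (Some u) (Some v) /\
     (x - x' = unitv R u - unitv R v \/ x - x' = - (unitv R u - unitv R v)))
  \/
  (exists u : 'I_k, E (Some u) bot /\
     (x - x' = unitv R u \/ x - x' = - unitv R u)).

Definition dp_neighbors (R : ringType) (n : nat) (y y' : 'cV[R]_n) : Prop :=
  exists i : 'I_n, y - y' = unitv R i \/ y - y' = - unitv R i.

(* A mechanism answering a workload of q queries on databases in R^n:
   a map from databases to probability distributions on answer vectors
   (q-tuples of reals, product Borel sigma-algebra). *)
Definition mechanism (R : realType) (n q : nat) :=
  'cV[R]_n -> probability (q.-tuple R) R.

Definition blowfish_private (R : realType) (k q : nat) (E : rel (option 'I_k))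
    (eps : R) (M : mechanism R k q) : Prop :=
  forall x x' : 'cV[R]_k, blowfish_neighbors E x x' ->
  forall S : set (q.-tuple R), measurable S ->
    (M x S <= (expR eps)%:E * M x' S)%E.

Definition dp_private (R : realType) (n q : nat) (eps : R)
    (M : mechanism R n q) : Prop :=
  forall y y' : 'cV[R]_n, dp_neighbors y y' ->
  forall S : set (q.-tuple R), measurable S ->
    (M y S <= (expR eps)%:E * M y' S)%E.

Definition mech_error (R : realType) (n q : nat) (W : 'M[R]_(q, n))
    (M : mechanism R n q) (x : 'cV[R]_n) : \bar R :=
  (\sum_(i < q) \int[M x]_(w in setT) (((W *m x) i 0 - tnth w i) ^+ 2)%:E)%E.

From HB Require Import structures.
From mathcomp Require Import all_boot all_order all_algebra.
From mathcomp Require Import all_classical all_reals all_analysis.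

Import Order.TTheory GRing.Theory Num.Theory.
Local Open Scope classical_set_scope.
Local Open Scope ring_scope.
Set Implicit Arguments.
Unset Strict Implicit.

(* Root the tree at the vertex bot and let par u be the parent of u.  In a
   tree every edge joins a vertex to its parent, so the Blowfish steps are
   exactly the vectors +-(e_u - e_(par u)), where e_bot = 0.  The matrix P_G
   whose u-th column is e_u - e_(par u) maps the unit vectors onto these
   steps, and its inverse is the 0/1 matrix recording which vertices lie on
   the path from a vertex to the root.  Hence x |-> P_G^-1 x carries Blowfish
   neighbours to differential-privacy neighbours and P_G carries them back,
   which transfers privacy in both directions; the error is unchanged since
   W P_G P_G^-1 x = W x. *)

Lemma fconnect_fixpoint (T : finType) (f : T -> T) x y :
  f x = x -> fconnect f x y -> y = x.
Proof. by move=> fx /iter_findex <-; apply: iter_fix. Qed.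

Lemma fconnect_rank_le (T : finType) (f : T -> T) (r : T -> nat) :
  (forall x, r (f x) <= r x)%N -> forall x y, fconnect f x y -> (r y <= r x)%N.
Proof.
move=> fr x y /iter_findex <-; elim: findex => //= n IH.
exact: leq_trans (fr _) IH.
Qed.

Definition unitv_opt (R : nzRingType) (k : nat) (a : option 'I_k) : 'cV[R]_k :=
  if a is Some u then unitv R u else 0.

Lemma blowfish_neighborsE (R : nzRingType) (k : nat) (E : rel (option 'I_k))
    (x x' : 'cV[R]_k) :
  symmetric E -> irreflexive E ->
  blowfish_neighbors E x x' <->
  exists a b, E a b /\ x - x' = unitv_opt R a - unitv_opt R b.
Proof.
move=> E_sym E_irr; split.
- case=> [[u [v [Euv [dx|dx]]]]|[u [Eu [dx|dx]]]].
  + by exists (Some u), (Some v).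
  + by exists (Some v), (Some u); rewrite E_sym dx opprB.
  + by exists (Some u), None; rewrite dx subr0.
  + by exists None, (Some u); rewrite E_sym dx sub0r.
- case=> [[u|] [[v|] [Eab dx]]].
  + by left; exists u, v; split => //; left.
  + by right; exists u; split => //; left; rewrite dx subr0.
  + by right; exists v; rewrite E_sym; split => //; right; rewrite dx sub0r.
  + by rewrite E_irr in Eab.
Qed.

Section ParentTree.

Variables (R : nzRingType) (k : nat).
Variables (par : 'I_k -> option 'I_k) (d : option 'I_k -> nat).
Hypothesis par_rank : forall u, (d (par u) < d (Some u))%N.

Definition parent (a : option 'I_k) : option 'I_k := obind par a.

Definition child_of (a b : option 'I_k) : bool :=
  if a is Some u then par u == b else false.

Definition parent_edge : rel (option 'I_k) :=
  fun a b => child_of a b || child_of b a.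

Lemma parent_rank a : (d (parent a) <= d a)%N.
Proof. by case: a => [u|] //=; apply: ltnW. Qed.

Lemma parent_edge_sym : symmetric parent_edge.
Proof. by move=> a b; rewrite /parent_edge orbC. Qed.

Lemma connect_parent_edge_bot a : connect parent_edge a None.
Proof.
have [n lt_an] := ubnP (d a); elim: n a lt_an => // n IH [u|] lt_un; last first.
  exact: connect0.
apply: connect_trans (IH (par u) _); last exact: leq_trans (par_rank u) lt_un.
by apply: connect1; rewrite /parent_edge /= eqxx.
Qed.

Lemma connect_parent_edge a b : connect parent_edge a b.
Proof.
apply: connect_trans (connect_parent_edge_bot a) _.
by rewrite (sym_connect_sym parent_edge_sym) connect_parent_edge_bot.
Qed.

Definition incidence_mx : 'M[R]_k :=
  \matrix_(i, j) (unitv_opt R (Some j) - unitv_opt R (par j)) i 0.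

Definition ancestor_mx : 'M[R]_k :=
  \matrix_(u, w) (fconnect parent (Some w) (Some u))%:R.

Lemma incidence_mx_unitv j :
  incidence_mx *m unitv R j = unitv_opt R (Some j) - unitv_opt R (par j).
Proof. by rewrite /unitv -colE; apply/colP => i; rewrite !mxE. Qed.

Lemma ancestor_mx_unitv_opt a :
  ancestor_mx *m unitv_opt R a = \col_u (fconnect parent a (Some u))%:R.
Proof.
apply/colP => u; case: a => [w|] /=; first by rewrite /unitv -colE !mxE.
rewrite mulmx0 !mxE; case: (boolP (fconnect parent None (Some u))) => //.
by move/(@fconnect_fixpoint _ parent None _ erefl).
Qed.

Lemma ancestor_mx_step j :
  ancestor_mx *m (unitv_opt R (Some j) - unitv_opt R (par j)) = unitv R j.
Proof.
rewrite mulmxBr !ancestor_mx_unitv_opt; apply/colP => u.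
rewrite !mxE fconnect_eqVf /= andbT [Some j == _]eq_sym.
case: (eqVneq u j) => [->|neq_uj]; last first.
  by rewrite (inj_eq Some_inj) (negbTE neq_uj) subrr.
have /negbTE -> : ~~ fconnect parent (par j) (Some j).
  apply/negP => /(fconnect_rank_le parent_rank).
  by rewrite leqNgt par_rank.
by rewrite eqxx subr0.
Qed.

Lemma ancestor_mxK : ancestor_mx *m incidence_mx = 1%:M.
Proof.
apply/matrixP => u j.
have /colP/(_ u) := ancestor_mx_step j.
by rewrite -incidence_mx_unitv mulmxA /unitv -colE !mxE andbT.
Qed.

Section TreeEdges.

Variable E : rel (option 'I_k).
Hypotheses (E_sym : symmetric E) (E_irr : irreflexive E).
Hypothesis E_acyclic :
  forall p : seq (option 'I_k), uniq p -> (2 < size p)%N -> ~~ cycle E p.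
Hypothesis E_par : forall u, E (Some u) (par u).

Lemma parent_edge_sub : subrel parent_edge E.
Proof.
move=> a b /orP[]; first by case: a => [u /eqP <-|].
by case: b => [v /eqP <-|] //; rewrite E_sym.
Qed.

Lemma parent_edge_of_E a b : E a b -> parent_edge a b.
Proof.
have /connectP [p ep ->] := connect_parent_edge a b.
case/shortenP: ep => [[|c [|c' s]]] es us _ Eab.
- by rewrite /= E_irr in Eab.
- by case/andP: es.
- case/negP: (E_acyclic us isT); rewrite /cycle rcons_path.
  by rewrite (sub_path parent_edge_sub es) E_sym.
Qed.

Lemma ancestor_dp_neighbors (x x' : 'cV[R]_k) :
  blowfish_neighbors E x x' ->
  dp_neighbors (ancestor_mx *m x) (ancestor_mx *m x').
Proof.
case/(blowfish_neighborsE _ _ E_sym E_irr) => a [b [Eab dx]].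
rewrite /dp_neighbors -mulmxBr dx.
case/orP: (parent_edge_of_E Eab) => [|].
- case: a {Eab dx} => [u /eqP <-|] //; exists u; left.
  by rewrite ancestor_mx_step.
- case: b {Eab dx} => [v /eqP <-|] //; exists v; right.
  by rewrite -opprB mulmxN ancestor_mx_step.
Qed.

Lemma incidence_blowfish_neighbors (y y' : 'cV[R]_k) :
  dp_neighbors y y' ->
  blowfish_neighbors E (incidence_mx *m y) (incidence_mx *m y').
Proof.
case=> i dy; apply/(blowfish_neighborsE _ _ E_sym E_irr); rewrite -mulmxBr.
case: dy => ->; [exists (Some i), (par i) | exists (par i), (Some i)].
  by rewrite incidence_mx_unitv.
by rewrite mulmxN incidence_mx_unitv opprB E_sym.
Qed.

End TreeEdges.

End ParentTree.

Section Reparametrization.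

Variables (R : realType) (k m : nat) (E : rel (option 'I_k)).
Variables (P : 'M[R]_(k, m)) (Pinv : 'M[R]_(m, k)).
Hypotheses (PPinv : P *m Pinv = 1%:M) (PinvP : Pinv *m P = 1%:M).

Lemma reparam_workload q (W : 'M[R]_(q, k)) (x : 'cV[R]_k) :
  (W *m P) *m (Pinv *m x) = W *m x.
Proof. by rewrite mulmxA -(mulmxA W) PPinv mulmx1. Qed.

Lemma mech_error_reparam q (W : 'M[R]_(q, k)) (M : mechanism R m q)
    (x : 'cV[R]_k) :
  mech_error (W *m P) M (Pinv *m x) = mech_error W (fun x0 => M (Pinv *m x0)) x.
Proof. by rewrite /mech_error reparam_workload. Qed.

Lemma reparam_bijective q :
  bijective (fun p : 'cV[R]_k * 'M[R]_(q, k) => (Pinv *m p.1, p.2 *m P)).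
Proof.
exists (fun p : 'cV[R]_m * 'M[R]_(q, m) => (P *m p.1, p.2 *m Pinv)).
- by case=> x W /=; rewrite mulmxA PPinv mul1mx -mulmxA PPinv mulmx1.
- by case=> y V /=; rewrite mulmxA PinvP mul1mx -mulmxA PinvP mulmx1.
Qed.

Hypothesis Pinv_neighbors : forall x x',
  blowfish_neighbors E x x' -> dp_neighbors (Pinv *m x) (Pinv *m x').
Hypothesis P_neighbors : forall y y',
  dp_neighbors y y' -> blowfish_neighbors E (P *m y) (P *m y').

Lemma blowfish_private_reparam q eps (M : mechanism R m q) :
  blowfish_private E eps (fun x => M (Pinv *m x)) <-> dp_private eps M.
Proof.
split=> [priv y y' /P_neighbors | priv x x' /Pinv_neighbors]; last exact: priv.
by move/priv; rewrite !mulmxA PinvP !mul1mx.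
Qed.

End Reparametrization.

Section ParentChoice.

Variables (k : nat) (E : rel (option 'I_k)).

Definition reaches_bot_in (v : option 'I_k) (n : nat) : bool :=
  [exists t : n.-tuple (option 'I_k), path E v t && (last v t == None)].

Lemma reaches_bot_inP v p :
  path E v p -> last v p = None -> reaches_bot_in v (size p).
Proof.
by move=> ep lp; apply/existsP; exists (in_tuple p); rewrite /= ep lp.
Qed.

Lemma connected_parent_rank :
  (forall u v, connect E u v) ->
  exists (par : 'I_k -> option 'I_k) (d : option 'I_k -> nat),
    (forall u, E (Some u) (par u)) /\ (forall u, (d (par u) < d (Some u))%N).
Proof.
move=> E_conn.
have reach v : exists n, reaches_bot_in v n.
  have /connectP [p ep lp] := E_conn v None.
  by exists (size p); apply: reaches_bot_inP.
pose d v := ex_minn (reach v).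
have d_reach v : reaches_bot_in v (d v) by rewrite /d; case: ex_minnP.
have d_min v n : reaches_bot_in v n -> (d v <= n)%N.
  by rewrite /d; case: ex_minnP => ? _; apply.
have closer u : exists w, E (Some u) w /\ (d w < d (Some u))%N.
  have /existsP [[[|w s] /= /eqP size_s]] := d_reach (Some u) => //.
  case/andP=> /andP [Euw ews] /eqP lw; exists w; split=> //.
  by rewrite -size_s ltnS; apply: d_min (reaches_bot_inP ews lw).
have [par parP] := choice closer.
by exists par, d; split => u; case: (parP u).
Qed.

End ParentChoice.

Theorem theorem4p2 (R : realType) (k : nat) (E : rel (option 'I_k))
    (hG : is_policy_tree E) :
  exists (m : nat) (P : 'M[R]_(k, m)) (Pinv : 'M[R]_(m, k)),
    [/\ P *m Pinv = 1%:M,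
        (forall q : nat,
           bijective (fun p : 'cV[R]_k * 'M[R]_(q, k) =>
                        (Pinv *m p.1, p.2 *m P))),
        (forall (q : nat) (W : 'M[R]_(q, k)) (x : 'cV[R]_k),
           (W *m P) *m (Pinv *m x) = W *m x)
      & (forall (q : nat) (W : 'M[R]_(q, k)) (x : 'cV[R]_k) (eps : R)
                (alpha : \bar R) (M : mechanism R m q),
           (blowfish_private E eps (fun x0 => M (Pinv *m x0)) /\
              mech_error W (fun x0 => M (Pinv *m x0)) x = alpha)
           <->
           (dp_private eps M /\ mech_error (W *m P) M (Pinv *m x) = alpha))].
Proof.
case: hG => E_sym E_irr E_conn E_acyclic.
have [par [d [E_par par_rank]]] := connected_parent_rank E_conn.
pose P := incidence_mx R par; pose Pinv := ancestor_mx R par.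
have PinvP : Pinv *m P = 1%:M by apply: ancestor_mxK par_rank.
have PPinv : P *m Pinv = 1%:M by apply: mulmx1C.
exists k, P, Pinv; split => // [q|q W x|q W x eps alpha M].
- exact: reparam_bijective.
- exact: reparam_workload.
rewrite mech_error_reparam // (blowfish_private_reparam PinvP) //.
- exact: ancestor_dp_neighbors.
- exact: incidence_blowfish_neighbors.
Qed.
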